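(* Let $k\geq 0$ and let $i,j\geq k+2$ be integers. Then $R_k^{\mathcal{CO}}(i,j)\geq (i-1)+R_k^{\mathcal{CO}}(i,j-k-1)$, where $\mathcal{CO}$ is the class of cographs.
   Context: All graphs are finite and simple. For a graph $G$ and a nonnegative integer $k$, a $k$-sparse $j$-set is a set of $j$ vertices of $G$ inducing a subgraph of maximum degree at most $k$; a $k$-dense $i$-set is a set of $i$ vertices of $G$ that is $k$-sparse in the complement of $G$. For a graph class $\mathcal{G}$, $R_k^{\mathcal{G}}(i,j)$ is the smallest natural number $n$ such that every graph on $n$ vertices in $\mathcal{G}$ has either a $k$-dense $i$-set or a $k$-sparse $j$-set (in particular every set of at most $k+1$ vertices is both $k$-sparse and $k$-dense). A cograph is a graph containing no induced path on four vertices. *)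

From mathcomp Require Import all_boot.
From Stdlib Require Import ClassicalEpsilon.
Set Implicit Arguments. Unset Strict Implicit. Unset Printing Implicit Defensive.

Definition simple_graph (T : finType) (e : rel T) : Prop :=
  (forall x, ~~ e x x) /\ (forall x y, e x y = e y x).

Definition cograph (T : finType) (e : rel T) : Prop :=
  ~ exists a b c d : T,
      [/\ uniq [:: a; b; c; d],
          [&& e a b, e b c & e c d] &
          [&& ~~ e a c, ~~ e b d & ~~ e a d]].

Definition k_sparse (T : finType) (e : rel T) (k : nat) (S : {set T}) : Prop :=
  forall x, x \in S -> #|[set y in S | e x y]| <= k.

Definition k_dense (T : finType) (e : rel T) (k : nat) (S : {set T}) : Prop :=
  forall x, x \in S -> #|[set y in S | (y != x) && ~~ e x y]| <= k.

Definition ramsey_prop_CO (k i j n : nat) : Prop :=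
  forall e : rel 'I_n, simple_graph e -> cograph e ->
    (exists S : {set 'I_n}, #|S| = i /\ k_dense e k S) \/
    (exists S : {set 'I_n}, #|S| = j /\ k_sparse e k S).

(* R_k^{CO}(i,j): the smallest n with ramsey_prop_CO k i j n
   (chosen by epsilon; such n exists by Ramsey's theorem). *)
Definition R_CO (k i j : nat) : nat :=
  epsilon (inhabits 0%N)
    (fun n => ramsey_prop_CO k i j n /\ forall m, ramsey_prop_CO k i j m -> n <= m).

From mathcomp Require Import all_boot zify.
From Stdlib Require Import Classical ClassicalEpsilon Wf_nat.
Set Implicit Arguments. Unset Strict Implicit. Unset Printing Implicit Defensive.

(* Let G be a cograph on R_k^CO(i, j-k-1) - 1 vertices with neither a k-dense
   i-set nor a k-sparse (j-k-1)-set, and add to it, disjointly, the join H of a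
   clique on p = i-k-2 vertices with an independent set of k+1 vertices.  This
   is again a cograph, on R_k^CO(i, j-k-1) - 1 + (i-1) vertices.  An i-set S
   meeting H contains a vertex of H that is non-adjacent to all vertices of S
   outside the clique but itself, and there are at least i-p-1 = k+1 of them; an
   i-set inside G is not k-dense by the choice of G.  A k-sparse set meets H in
   at most k+1 vertices (a clique vertex is adjacent to all of H), so it
   contains a k-sparse set of G of size j-k-1 if it has j vertices. *)

Lemma subset_of_card (T : finType) (A : {set T}) n :
  n <= #|A| -> exists2 B : {set T}, B \subset A & #|B| = n.
Proof.
elim: n => [|n IHn] leA; first by exists set0; rewrite ?sub0set ?cards0.
have [B sBA cardB] := IHn (ltnW leA).
have /subsetPn [x xA xNB] : ~~ (A \subset B).
  by apply: contraTN leA => /subset_leq_card; rewrite cardB -ltnNge.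
by exists (x |: B); rewrite ?cardsU1 ?xNB ?cardB // subUset sub1set xA.
Qed.

Lemma card_sum_set (T1 T2 : finType) (S : {set T1 + T2}) :
  #|S| = #|inl @^-1: S| + #|inr @^-1: S|.
Proof. by rewrite -sum1_card (big_sumType _ (mem S)) !sum1dep_card. Qed.

Lemma imset_setIdl (T U : finType) (f : T -> U) (S : {set T}) (P : pred U) :
  [set y in f @: S | P y] = f @: [set x in S | P (f x)].
Proof.
apply/setP => y; apply/idP/imsetP => [|[x + ->]]; rewrite !inE.
  by case/andP => /imsetP [x xS ->] Pfx; exists x; rewrite ?inE ?xS.
by case/andP => xS Pfx; rewrite imset_f.
Qed.

Section InducedSubgraph.

Variables (T U : finType) (f : T -> U) (e : rel U) (k : nat).
Hypothesis f_inj : injective f.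

Lemma k_dense_imset (S : {set T}) :
  k_dense e k (f @: S) <-> k_dense (relpre f e) k S.
Proof.
have card_nonadj x : #|[set y in f @: S | (y != f x) && ~~ e (f x) y]| =
                     #|[set y in S | (y != x) && ~~ relpre f e x y]|.
  by rewrite imset_setIdl card_imset //=; apply: eq_card => y; rewrite !inE inj_eq.
split=> dS x => [xS | /imsetP [x' x'S ->]].
  by rewrite -card_nonadj; apply: dS; rewrite imset_f.
by rewrite card_nonadj; apply: dS.
Qed.

Lemma k_sparse_imset (S : {set T}) :
  k_sparse e k (f @: S) <-> k_sparse (relpre f e) k S.
Proof.
have card_adj x : #|[set y in f @: S | e (f x) y]| = #|[set y in S | relpre f e x y]|.
  by rewrite imset_setIdl card_imset.
split=> sS x => [xS | /imsetP [x' x'S ->]].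
  by rewrite -card_adj; apply: sS; rewrite imset_f.
by rewrite card_adj; apply: sS.
Qed.

Lemma simple_graph_relpre : simple_graph e -> simple_graph (relpre f e).
Proof. by case=> irr sym; split=> [x|x y] /=; [apply: irr | apply: sym]. Qed.

Lemma cograph_relpre : cograph e -> cograph (relpre f e).
Proof.
move=> coe [a [b [c [d [abcd path nonadj]]]]]; apply: coe.
by exists (f a), (f b), (f c), (f d); rewrite (map_inj_uniq f_inj [:: a; b; c; d]).
Qed.

End InducedSubgraph.

Lemma k_sparse_subset (T : finType) (e : rel T) k (A B : {set T}) :
  B \subset A -> k_sparse e k A -> k_sparse e k B.
Proof.
move=> sBA sA x xB; apply: leq_trans (sA x (subsetP sBA x xB)).
apply/subset_leq_card/subsetP => y; rewrite !inE => /andP [yB ->].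
by rewrite (subsetP sBA).
Qed.

Section Ramsey.

Variable T : finType.

Definition clique (e : rel T) (S : {set T}) := {in S &, forall x y, x != y -> e x y}.

Definition has_clique (e : rel T) (A : {set T}) (a : nat) :=
  exists S : {set T}, [/\ S \subset A, #|S| = a & clique e S].

Lemma has_clique0 e (A : {set T}) : has_clique e A 0.
Proof. by exists set0; rewrite sub0set cards0; split=> // x y; rewrite inE. Qed.

Lemma has_clique_subset e (A B : {set T}) a :
  A \subset B -> has_clique e A a -> has_clique e B a.
Proof. by move=> sAB [S [sSA cardS clS]]; exists S; rewrite (subset_trans sSA). Qed.

Lemma has_clique_neighbours e (A : {set T}) v a : symmetric e -> v \in A ->
  has_clique e [set y in A | (y != v) && e v y] a -> has_clique e A a.+1.
Proof.
move=> sym vA [S [sSN cardS clS]].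
have adj_v y : y \in S -> (y != v) && e v y.
  by move=> /(subsetP sSN); rewrite inE => /andP [].
have vNS : v \notin S by apply/negP => /adj_v; rewrite eqxx.
have sSA : S \subset A by apply: subset_trans sSN _; rewrite setIdE subsetIl.
exists (v |: S); split; first by rewrite subUset sub1set vA sSA.
  by rewrite cardsU1 vNS cardS.
move=> x y; rewrite !inE => /predU1P [-> | xS] /predU1P [-> | yS]; rewrite ?eqxx //.
- by case/andP: (adj_v y yS).
- by case/andP: (adj_v x xS); rewrite sym.
- exact: clS.
Qed.

Variables e1 e2 : rel T.
Hypotheses (e1_sym : symmetric e1) (e2_sym : symmetric e2).
Hypothesis e12_total : forall x y, x != y -> e1 x y || e2 x y.

Theorem ramsey a b (A : {set T}) :
  2 ^ (a + b) <= #|A| -> has_clique e1 A a \/ has_clique e2 A b.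
Proof.
elim: a b A => [|a IHa] b A; first by left; apply: has_clique0.
elim: b A => [|b IHb] A cardA; first by right; apply: has_clique0.
have /card_gt0P [v vA] : 0 < #|A| by apply: leq_trans cardA; rewrite expn_gt0.
pose N e := [set y in A | (y != v) && e v y].
have cover : A \subset v |: (N e1 :|: N e2).
  apply/subsetP => y yA; rewrite !inE yA /=.
  by case: eqVneq => //= yNv; apply: e12_total; rewrite eq_sym.
have sNA e : N e \subset A by rewrite /N setIdE subsetIl.
have : 2 ^ (a + b.+1) <= #|N e1| \/ 2 ^ (a.+1 + b) <= #|N e2|.
  have := subset_leq_card cover; rewrite cardsU1.
  have [leU _] := leq_card_setU (N e1) (N e2).
  rewrite -addSnnS; move: cardA; rewrite addnS expnS.
  have := leq_b1 (v \notin N e1 :|: N e2); lia.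
case=> [/IHa [cl1 | cl2] | /IHb [cl1 | cl2]].
- by left; apply: has_clique_neighbours cl1.
- by right; apply: has_clique_subset (sNA _) cl2.
- by left; apply: has_clique_subset (sNA _) cl1.
- by right; apply: has_clique_neighbours cl2.
Qed.

End Ramsey.

Definition has_dense_set (T : finType) (e : rel T) k i :=
  exists S : {set T}, #|S| = i /\ k_dense e k S.

Definition has_sparse_set (T : finType) (e : rel T) k j :=
  exists S : {set T}, #|S| = j /\ k_sparse e k S.

Definition co_ramsey_counterexample (T : finType) (e : rel T) k i j :=
  [/\ simple_graph e, cograph e, ~ has_dense_set e k i & ~ has_sparse_set e k j].

Lemma ramsey_prop_COPn k i j n :
  ~ ramsey_prop_CO k i j n <-> exists e : rel 'I_n, co_ramsey_counterexample e k i j.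
Proof.
split=> [notP | [e [simple co noD noS]] P]; last by case: (P e simple co).
apply: NNPP => noCE; apply: notP => e simple co; apply: NNPP => noDS.
by apply: noCE; exists e; split=> // [[S DS] | [S SS]]; apply: noDS; [left | right]; exists S.
Qed.

Lemma co_ramsey_counterexample_relpre (T U : finType) (f : T -> U) (e : rel U) k i j :
  injective f -> co_ramsey_counterexample e k i j ->
  co_ramsey_counterexample (relpre f e) k i j.
Proof.
move=> f_inj [simple co noD noS]; split.
- exact: simple_graph_relpre.
- exact: cograph_relpre.
- by move=> [S [cardS dS]]; apply: noD; exists (f @: S); rewrite card_imset // k_dense_imset.
- by move=> [S [cardS sS]]; apply: noS; exists (f @: S); rewrite card_imset // k_sparse_imset.
Qed.

Lemma clique_k_dense (T : finType) (e : rel T) k (S : {set T}) :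
  clique e S -> k_dense e k S.
Proof.
move=> clS x xS; apply: leq_trans (leq0n k); rewrite leqn0 cards_eq0.
apply/eqP/setP => y; rewrite !inE; apply/negbTE.
by apply/andP => -[yS /andP [yNx]]; rewrite clS // eq_sym.
Qed.

Lemma stable_k_sparse (T : finType) (e : rel T) k (S : {set T}) :
  (forall x, ~~ e x x) -> clique [rel x y | ~~ e x y] S -> k_sparse e k S.
Proof.
move=> irr stS x xS; apply: leq_trans (leq0n k); rewrite leqn0 cards_eq0.
apply/eqP/setP => y; rewrite !inE; apply/negbTE/andP => -[yS exy].
case: (eqVneq x y) exy => [<- | xNy]; first by rewrite (negbTE (irr x)).
by rewrite (negbTE (stS x y xS yS xNy)).
Qed.

Lemma ramsey_prop_CO_exp k i j : ramsey_prop_CO k i j (2 ^ (i + j)).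
Proof.
move=> e [irr sym] _.
have co_sym : symmetric [rel x y | ~~ e x y] by move=> x y /=; rewrite sym.
have total x y : x != y -> e x y || ~~ e x y by rewrite orbN.
have := @ramsey _ _ _ sym co_sym total i j [set: 'I_(2 ^ (i + j))].
rewrite cardsT card_ord leqnn => /(_ isT) [[S [_ cardS clS]] | [S [_ cardS stS]]].
- by left; exists S; split=> //; apply: clique_k_dense.
- by right; exists S; split=> //; apply: stable_k_sparse stS.
Qed.

Lemma R_COP k i j : ramsey_prop_CO k i j (R_CO k i j) /\
  forall m, ramsey_prop_CO k i j m -> R_CO k i j <= m.
Proof.
have P_dec n : ramsey_prop_CO k i j n \/ ~ ramsey_prop_CO k i j n := classic _.
have P_ex : exists n, ramsey_prop_CO k i j n := ex_intro _ _ (@ramsey_prop_CO_exp k i j).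
have [n [[Pn minn] _]] := dec_inh_nat_subset_has_unique_least_element _ P_dec P_ex.
apply: (epsilon_spec (inhabits 0)
  (fun n => ramsey_prop_CO k i j n /\ forall m, ramsey_prop_CO k i j m -> n <= m)).
by exists n; split=> // m /minn /leP.
Qed.

Lemma R_CO_gt_card (T : finType) (e : rel T) k i j :
  co_ramsey_counterexample e k i j -> #|T| < R_CO k i j.
Proof.
move=> ce; rewrite ltnNge; apply/negP => le_R_T.
pose f (x : 'I_(R_CO k i j)) : T := enum_val (widen_ord le_R_T x).
have f_inj : injective f by move=> x y /enum_val_inj /(congr1 val) /= /val_inj.
have [P_R _] := R_COP k i j.
apply: (@ramsey_prop_COPn k i j _).2 P_R.
by exists (relpre f e); apply: co_ramsey_counterexample_relpre.
Qed.

Lemma R_CO_gt0 k i j : 0 < i -> 0 < j -> 0 < R_CO k i j.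
Proof.
move=> i_gt0 j_gt0; rewrite -(card_ord 0).
apply: (@R_CO_gt_card _ [rel x y : 'I_0 | false]).
split; [by split=> -[] | by move=> [[]] | |].
- by move=> [S [cardS _]]; move: (max_card S); rewrite card_ord cardS leqNgt i_gt0.
- by move=> [S [cardS _]]; move: (max_card S); rewrite card_ord cardS leqNgt j_gt0.
Qed.

Lemma R_CO_counterexample k i j : 0 < R_CO k i j ->
  exists e : rel 'I_(R_CO k i j).-1, co_ramsey_counterexample e k i j.
Proof.
move=> R_gt0; apply/ramsey_prop_COPn => /(R_COP k i j).2.
by rewrite leqNgt ltn_predL R_gt0.
Qed.

(* [sum_rel false] is the disjoint union of two graphs, [sum_rel true] their join. *)
Definition sum_rel (T1 T2 : finType) (cross : bool) (e1 : rel T1) (e2 : rel T2) :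
    rel (T1 + T2) :=
  fun x y => match x, y with
  | inl a, inl b => e1 a b
  | inr a, inr b => e2 a b
  | _, _ => cross
  end.

Definition complete_rel (T : finType) : rel T := [rel x y | x != y].
Definition empty_rel (T : finType) : rel T := [rel _ _ | false].
Arguments complete_rel : clear implicits.
Arguments empty_rel : clear implicits.

Section SumGraph.

Variables (T1 T2 : finType) (cross : bool) (e1 : rel T1) (e2 : rel T2).

Lemma sum_rel_simple :
  simple_graph e1 -> simple_graph e2 -> simple_graph (sum_rel cross e1 e2).
Proof.
case=> irr1 sym1 [irr2 sym2].
split=> [[a|a] | [a|a] [b|b]] //=.
all: by [apply: irr1 | apply: irr2 | apply: sym1 | apply: sym2].
Qed.

Lemma sum_rel_cograph : cograph e1 -> cograph e2 -> cograph (sum_rel cross e1 e2).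
Proof.
move=> co1 co2 [[a|a] [[b|b] [[c|c] [[d|d] [u path nonadj]]]]].
all: try by move: path nonadj; case: cross => /=; rewrite ?andbF.
- by apply: co1; exists a, b, c, d; rewrite (map_inj_uniq (@inl_inj _ _) [:: a; b; c; d]) in u.
- by apply: co2; exists a, b, c, d; rewrite (map_inj_uniq (@inr_inj _ _) [:: a; b; c; d]) in u.
Qed.

End SumGraph.

Lemma complete_rel_simple (T : finType) : simple_graph (complete_rel T).
Proof. by split=> [x|x y] /=; rewrite /complete_rel /= ?eqxx // eq_sym. Qed.

Lemma complete_rel_cograph (T : finType) : cograph (complete_rel T).
Proof.
move=> [a [b [c [d [u _ /and3P [/negPn /eqP ac _ _]]]]]].
by move: u; rewrite ac /= !inE eqxx orbT.
Qed.

Lemma empty_rel_simple (T : finType) : simple_graph (empty_rel T).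
Proof. by []. Qed.

Lemma empty_rel_cograph (T : finType) : cograph (empty_rel T).
Proof. by move=> [a [b [c [d [_ /= ]]]]]. Qed.

Lemma k_sparse_join_card p k (S : {set 'I_p + 'I_k.+1}) :
  k_sparse (sum_rel true (complete_rel 'I_p) (empty_rel 'I_k.+1)) k S -> #|S| <= k.+1.
Proof.
move=> sS; case: (pickP (fun a => inl a \in S)) => [a aS | noK].
  rewrite (cardsD1 (inl a) S) aS ltnS; apply: leq_trans (sS _ aS).
  apply/subset_leq_card/subsetP => y; rewrite !inE => /andP [yNa yS].
  by rewrite yS; case: y yNa {yS} => // b; rewrite eq_sym (inj_eq (@inl_inj _ _)).
have : S \subset inr @: [set: 'I_k.+1].
  by apply/subsetP => -[a | b] yS; [rewrite noK in yS | rewrite imset_f].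
move/subset_leq_card/leq_trans; apply.
by apply: leq_trans (leq_imset_card _ _) _; rewrite cardsT card_ord.
Qed.

Definition ramsey_extension (T : finType) (e : rel T) p k :=
  sum_rel false e (sum_rel true (complete_rel 'I_p) (empty_rel 'I_k.+1)).
Arguments ramsey_extension {T} e p k.

Section RamseyExtension.

Variables (T : finType) (e : rel T) (p k : nat).

Let E := ramsey_extension e p k.

Lemma ramsey_extension_no_dense i : p + k + 2 <= i ->
  ~ has_dense_set e k i -> ~ has_dense_set E k i.
Proof.
move=> le_i noD [S [cardS dS]].
pose K : {set T + ('I_p + 'I_k.+1)} := [set inr (inl a) | a : 'I_p].
have card_K : #|K| <= p by rewrite (leq_trans (leq_imset_card _ _)) ?card_ord.
have no_apex y : y \in S -> (forall z, z \in S -> z \notin K -> z != y -> ~~ E y z) -> False.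
  move=> yS nonadj.
  pose N := [set z in S | (z != y) && ~~ E y z].
  have cover : S \subset N :|: K :|: [set y].
    apply/subsetP => z zS; rewrite !inE zS /=.
    case: eqVneq => [_ | zNy] /=; rewrite ?orbT ?orbF //.
    by case: (boolP (z \in K)) => zK; rewrite ?orbT // nonadj.
  have [leU1 _] := leq_card_setU (N :|: K) [set y].
  have [leU2 _] := leq_card_setU N K.
  have : i <= k + p + 1.
    rewrite -cardS (leq_trans (subset_leq_card cover)) //.
    rewrite (leq_trans leU1) // cards1 leq_add2r.
    exact: leq_trans leU2 (leq_add (dS y yS) card_K).
  lia.
(* The apex is taken in the independent part of H if S meets it, else in the clique. *)
case: (pickP (fun b => inr (inr b) \in S)) => [b bS | noI].
  by apply: (no_apex _ bS) => -[g | [a | b']] // _; rewrite imset_f.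
case: (pickP (fun a => inr (inl a) \in S)) => [a aS | noK].
  by apply: (no_apex _ aS) => -[g | [a' | b]] //; rewrite ?imset_f ?noI.
have defS : S = inl @: (inl @^-1: S).
  apply/setP => -[g | [a | b]].
  - by rewrite mem_imset ?inE //; apply: inl_inj.
  - by apply/idP/imsetP => [| [] //]; rewrite noK.
  - by apply/idP/imsetP => [| [] //]; rewrite noI.
apply: noD; exists (inl @^-1: S); split.
  by rewrite -cardS {2}defS card_imset //; apply: inl_inj.
by apply/(k_dense_imset E k (@inl_inj _ _)); rewrite -defS.
Qed.

Lemma ramsey_extension_no_sparse j :
  ~ has_sparse_set e k j -> ~ has_sparse_set E k (j + k + 1).
Proof.
move=> noS [S [cardS sS]].
have card_right : #|inr @^-1: S| <= k.+1.
  apply/k_sparse_join_card/(k_sparse_imset E k (@inr_inj _ _)).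
  by apply: k_sparse_subset sS; apply/subsetP => _ /imsetP [w + ->]; rewrite inE.
have card_left : j <= #|inl @^-1: S|.
  rewrite -(leq_add2r k.+1) addnS -addn1 -cardS card_sum_set.
  exact: leq_add (leqnn _) card_right.
have [B sB cardB] := subset_of_card card_left.
apply: noS; exists B; split=> //.
apply/(k_sparse_imset E k (@inl_inj _ _)); apply: k_sparse_subset sS.
by apply/subsetP => _ /imsetP [g /(subsetP sB) + ->]; rewrite inE.
Qed.

Lemma ramsey_extension_counterexample i j : p + k + 2 <= i ->
  co_ramsey_counterexample e k i j -> co_ramsey_counterexample E k i (j + k + 1).
Proof.
move=> le_i [simple co noD noS]; split.
- apply: sum_rel_simple => //; apply: sum_rel_simple.
  + exact: complete_rel_simple.
  + exact: empty_rel_simple.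
- apply: sum_rel_cograph => //; apply: sum_rel_cograph.
  + exact: complete_rel_cograph.
  + exact: empty_rel_cograph.
- exact: ramsey_extension_no_dense.
- exact: ramsey_extension_no_sparse.
Qed.

End RamseyExtension.

Theorem lemma7p5 (k i j : nat) :
  k + 2 <= i -> k + 2 <= j ->
  (i - 1) + R_CO k i (j - k - 1) <= R_CO k i j.
Proof.
move=> le_i le_j; set j' := j - k - 1.
have R_gt0 : 0 < R_CO k i j' by apply: R_CO_gt0; lia.
have [e ce] := R_CO_counterexample R_gt0.
have /R_CO_gt_card : co_ramsey_counterexample (ramsey_extension e (i - k - 2) k) k i j.
  have -> : j = j' + k + 1 by rewrite /j'; lia.
  by apply: ramsey_extension_counterexample => //; lia.
by rewrite !card_sum !card_ord; lia.
Qed.
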